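(* Let $A\in\mathbb{R}^{m\times n}$ with $n>m$, and let $A=U_A\Sigma_AV_A^T$ be its economy SVD, $V_A\in\mathbb{R}^{n\times m}$ with orthonormal columns. Let $\lambda>0$. Let $X\in\mathbb{R}^{n\times s}$ with $n>s>m$ be a matrix such that, for some $0<\epsilon<1$, $$1-\epsilon<\sigma_{\min}(X^TV_A)\le\sigma_{\max}(X^TV_A)<1+\epsilon .$$ Suppose $R\in\mathbb{R}^{m\times m}$ is an upper triangular matrix such that $R^TR=AXX^TA^T+\lambda I_m$. Then $$\kappa_2(R^{-T}D)\le\frac{1+\epsilon}{1-\epsilon},\qquad\text{where } D=\begin{bmatrix}A & \sqrt{\lambda}I_m\end{bmatrix}\in\mathbb{R}^{m\times(n+m)}.$$
   Context: $\sigma_{\min},\sigma_{\max}$ denote the smallest and largest singular values (of the $s\times m$ matrix $X^TV_A$, among its $m$ singular values), and $\kappa_2(M)=\sigma_{\max}(M)/\sigma_{\min}(M)$ is the spectral condition number of a full-row-rank matrix $M$ (ratio of largest to smallest of its $m$ singular values). Note $R$ is invertible since $R^TR$ is positive definite. *)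

From HB Require Import structures.
From mathcomp Require Import all_boot all_order all_algebra.
From mathcomp Require Import all_classical all_reals.
Set Implicit Arguments. Unset Strict Implicit. Unset Printing Implicit Defensive.
Import Order.TTheory GRing.Theory Num.Theory.
Local Open Scope ring_scope.
Local Open Scope classical_set_scope.

(* Singular values of a real p x q matrix M: there are min(p,q) of them,
   namely the square roots of the eigenvalues of the min(p,q) x min(p,q)
   Gram matrix (M^T M if q <= p, M M^T otherwise). *)
Definition sq_singvals (R : realType) (p q : nat) (M : 'M[R]_(p, q)) : set R :=
  if (q <= p)%N then [set a | eigenvalue (M^T *m M) a]
  else [set a | eigenvalue (M *m M^T) a].

Definition sigma_min (R : realType) (p q : nat) (M : 'M[R]_(p, q)) : R :=
  Num.sqrt (inf (sq_singvals M)).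

Definition sigma_max (R : realType) (p q : nat) (M : 'M[R]_(p, q)) : R :=
  Num.sqrt (sup (sq_singvals M)).

Definition kappa2 (R : realType) (p q : nat) (M : 'M[R]_(p, q)) : R :=
  sigma_max M / sigma_min M.

Definition upper_triangular (R : realType) (m : nat) (M : 'M[R]_m) : Prop :=
  forall i j : 'I_m, (j < i)%N -> M i j = 0.

From HB Require Import structures.
From mathcomp Require Import all_boot all_order all_algebra.
From mathcomp Require Import all_classical all_reals.
From mathcomp Require Import complex polyrcf lra.
Set Implicit Arguments. Unset Strict Implicit. Unset Printing Implicit Defensive.
Import Order.TTheory GRing.Theory Num.Theory.
Local Open Scope ring_scope.
Local Open Scope classical_set_scope.

(* Write G := (X^T V)^T (X^T V); the hypothesis on the singular values of X^T V
   puts the spectrum of G in [(1-eps)^2, (1+eps)^2].  Since A = W V^T with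
   V^T V = 1, for every row vector u the Rayleigh quotient of G at y = u W gives
     (1-eps)^2 u(AA^T + lam)u^T <= u(R^T R)u^T <= (1+eps)^2 u(AA^T + lam)u^T,
   and the lam-term keeps both forms positive definite.  Now D D^T = AA^T + lam,
   so an eigenvector v of R^-T D D^T R^-1 with eigenvalue a yields, with
   u = v R^-T, the identity a u(R^T R)u^T = u(AA^T + lam)u^T; hence
   a lies in [(1+eps)^-2, (1-eps)^-2] and the condition number of R^-T D is at
   most (1+eps)/(1-eps). *)

Section QuadraticForms.
Variable R : realFieldType.

Definition qform n (S : 'M[R]_n) (u : 'rV[R]_n) : R := (u *m S *m u^T) 0 0.

Definition sqnorm n (u : 'rV[R]_n) : R := (u *m u^T) 0 0.

Lemma sqnorm_ge0 n (u : 'rV[R]_n) : 0 <= sqnorm u.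
Proof. by rewrite /sqnorm mxE; apply: sumr_ge0 => i _; rewrite mxE -expr2 sqr_ge0. Qed.

Lemma sqnorm_gt0 n (u : 'rV[R]_n) : u != 0 -> 0 < sqnorm u.
Proof.
move=> u0; rewrite lt_def sqnorm_ge0 andbT; apply: contra u0.
rewrite /sqnorm mxE => /eqP /psumr_eq0P u2_eq0; apply/eqP/matrixP => i j.
have /(_ j isT) /eqP := u2_eq0 (fun k _ => ltac:(by rewrite mxE -expr2 sqr_ge0)).
by rewrite ord1 !mxE mulf_eq0 orbb => /eqP.
Qed.

Lemma qform_gram n k (N : 'M[R]_(n, k)) (u : 'rV[R]_n) :
  qform (N *m N^T) u = sqnorm (u *m N).
Proof. by rewrite /qform /sqnorm trmx_mul !mulmxA. Qed.

Lemma qformD_scalar n (S : 'M[R]_n) (lam : R) (u : 'rV[R]_n) :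
  qform (S + lam%:M) u = qform S u + lam * sqnorm u.
Proof.
by rewrite /qform mulmxDr mulmxDl mul_mx_scalar -scalemxAl [LHS]mxE [X in _ + X]mxE.
Qed.

Lemma qform_eigenvector n (S : 'M[R]_n) (a : R) (v : 'rV[R]_n) :
  v *m S = a *: v -> qform S v = a * sqnorm v.
Proof. by rewrite /qform => ->; rewrite -scalemxAl mxE. Qed.

Lemma eigenvalue_gram_ge0 p q (B : 'M[R]_(p, q)) (a : R) :
  eigenvalue (B^T *m B) a -> 0 <= a.
Proof.
case/eigenvalueP => v /qform_eigenvector Ev v0.
have : 0 <= qform (B^T *m B) v by rewrite -[X in _ *m X]trmxK qform_gram sqnorm_ge0.
by rewrite Ev pmulr_lge0 // sqnorm_gt0.
Qed.

End QuadraticForms.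

Lemma has_ubound_eigenvalue (R : realType) n (G : 'M[R]_n) :
  has_ubound [set a : R | eigenvalue G a].
Proof.
exists (cauchy_bound (char_poly G)) => a /=.
rewrite eigenvalue_root_char => /rootP Ga.
apply: le_trans (real_ler_norm (num_real a)) (ltW (cauchy_boundP _ Ga)).
exact: monic_neq0 (char_poly_monic G).
Qed.

Section Rayleigh.
Local Open Scope sesquilinear_scope.
Variable R : rcfType.
Local Notation f := (real_complex R).

Lemma conjC_real_complex (x : R) : (f x)^* = f x.
Proof. by apply/CrealP/complex_realP; exists x. Qed.

Lemma eigenvalue_map_real_complex n (G : 'M[R]_n) (e : R) :
  eigenvalue (map_mx f G) (f e) -> eigenvalue G e.
Proof. by rewrite !eigenvalue_root_char -map_char_poly fmorph_root. Qed.

Lemma hermsym_map_real_complex n (G : 'M[R]_n) :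
  G^T = G -> map_mx f G \is hermsymmx.
Proof.
move=> Gsym; apply: realsym_hermsym.
  apply/is_hermitianmxP; rewrite expr0 scale1r map_mx_id //.
  by apply/matrixP => i j; rewrite !mxE -{1}Gsym mxE.
by apply/mxOverP => i j; rewrite mxE; apply/complex_realP; eexists.
Qed.

Lemma spectral_diag_eigenvalue n (G : 'M[R]_n) : G^T = G ->
  forall i, exists2 e, spectral_diag (map_mx f G) 0 i = f e & eigenvalue G e.
Proof.
move=> /hermsym_map_real_complex GCh i.
have /hermitian_normalmx/orthomx_spectralP GCE := GCh.
set P := spectralmx _ in GCE; set D := spectral_diag _ in GCE *.
have Punit : P \in unitmx := unitarymx_unit (spectral_unitarymx _).
have /complex_realP [e De] := mxOverP (hermitian_spectral_diag_real GCh) 0 i.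
exists e => //; apply: eigenvalue_map_real_complex; rewrite -De.
apply/eigenvalueP; exists (row i P).
  rewrite [X in _ *m X]GCE !mulmxA -row_mul mulmxV // row1.
  by rewrite -rowE row_diag_mx -scalemxAl -rowE.
apply/negP => /eqP /(congr1 (mulmx^~ (invmx P))).
rewrite -row_mul mulmxV // row1 mul0mx => /matrixP /(_ 0 i).
by rewrite !mxE !eqxx /= => /eqP; rewrite oner_eq0.
Qed.

Lemma rayleigh_bounds n (G : 'M[R]_n) (lo hi : R) :
  G^T = G -> (forall a, eigenvalue G a -> lo <= a <= hi) ->
  forall y : 'rV[R]_n, lo * sqnorm y <= qform G y <= hi * sqnorm y.
Proof.
move=> Gsym Geig y.
have /hermitian_normalmx/orthomx_spectralP GCE := hermsym_map_real_complex Gsym.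
set P := spectralmx _ in GCE; set D := spectral_diag _ in GCE.
have Pu : P \is unitarymx := spectral_unitarymx _.
have invP : invmx P = P^t* := invmx_unitary Pu.
pose w := map_mx f y *m P^t*.
have yCt : (map_mx f y)^t* = map_mx f y^T.
  by apply/matrixP => i j; rewrite !mxE conjC_real_complex.
have wt : w^t* = P *m (map_mx f y)^t* by rewrite trmx_mul map_mxM trmxCK.
(* in the eigenbasis of G both forms become weighted sums of the [|w_i|^2] *)
have qformE : f (qform G y) = \sum_i D 0 i * (w 0 i * (w 0 i)^*).
  transitivity (map_mx f (y *m G *m y^T) 0 0); first by rewrite mxE.
  rewrite !map_mxM -yCt GCE invP.
  rewrite !mulmxA -/w -mulmxA -wt mul_mx_diag mxE; apply: eq_bigr => j _.
  by rewrite !mxE mulrAC mulrC.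
have sqnormE : f (sqnorm y) = \sum_i w 0 i * (w 0 i)^*.
  transitivity (map_mx f (y *m y^T) 0 0); first by rewrite mxE.
  rewrite !map_mxM -yCt.
  rewrite -[X in X *m _](mulmx1 (map_mx f y)) -(mulVmx (unitarymx_unit Pu)) invP.
  by rewrite !mulmxA -/w -mulmxA -wt mxE; apply: eq_bigr => j _; rewrite !mxE.
apply/andP; split; rewrite -lecR rmorphM /= qformE sqnormE mulr_sumr;
  apply: ler_sum => i _; have [e -> /Geig /andP [loe ehi]] :=
    spectral_diag_eigenvalue Gsym i;
  by rewrite ler_wpM2r ?mul_conjC_ge0 // lecR.
Qed.

End Rayleigh.

Section SingularValues.
Variable R : realType.

Lemma ler_sqrtr_sqr (x c : R) : 0 <= c -> (Num.sqrt x <= c) = (x <= c ^+ 2).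
Proof. by move=> c0; rewrite -[c in LHS]ger0_norm // -sqrtr_sqr ler_sqrt ?sqr_ge0. Qed.

Lemma ltr_sqrtr_sqr (x c : R) : 0 <= c -> (c < Num.sqrt x) = (c ^+ 2 < x).
Proof. by move=> c0; rewrite !ltNge ler_sqrtr_sqr. Qed.

Lemma sq_singvals_tall p q (M : 'M[R]_(p, q)) : (q <= p)%N ->
  sq_singvals M = [set a | eigenvalue (M^T *m M) a].
Proof. by rewrite /sq_singvals => ->. Qed.

Lemma sq_singvals_wide p q (M : 'M[R]_(p, q)) : (p < q)%N ->
  sq_singvals M = [set a | eigenvalue (M *m M^T) a].
Proof. by rewrite /sq_singvals ltnNge => /negbTE ->. Qed.

Lemma eigenvalue_gram_sigma_bounds p q (B : 'M[R]_(p, q)) (c1 c2 a : R) :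
  (q <= p)%N -> 0 <= c1 -> c1 < sigma_min B -> sigma_max B < c2 ->
  eigenvalue (B^T *m B) a -> c1 ^+ 2 <= a <= c2 ^+ 2.
Proof.
rewrite /sigma_min /sigma_max => /sq_singvals_tall -> c1_ge0 c1_lt c2_gt Ba.
have c2_ge0 : 0 <= c2 by apply: le_trans (ltW c2_gt); apply: sqrtr_ge0.
rewrite ltr_sqrtr_sqr // in c1_lt; apply/andP; split.
  apply/(le_trans (ltW c1_lt))/ge_inf => //.
  by exists 0 => b /eigenvalue_gram_ge0.
rewrite -ler_sqrtr_sqr //; apply/(le_trans _ (ltW c2_gt))/ler_wsqrtr.
exact: ub_le_sup (has_ubound_eigenvalue _) _ Ba.
Qed.

Lemma kappa2_le_ratio p q (M : 'M[R]_(p, q)) (c1 c2 : R) :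
  (p < q)%N -> 0 < c1 -> 0 <= c2 ->
  (forall a, eigenvalue (M *m M^T) a -> c1 ^+ 2 <= a <= c2 ^+ 2) ->
  kappa2 M <= c2 / c1.
Proof.
move=> /sq_singvals_wide SM c1_gt0 c2_ge0 Meig.
rewrite /kappa2 /sigma_max /sigma_min SM; set S := [set a | _].
have [[a Sa]|S0] := pselect (exists a, S a); last first.
  have -> : S = set0 by apply/seteqP; split => b // Sb; apply: S0; exists b.
  by rewrite sup0 inf0 sqrtr0 mul0r divr_ge0 // ltW.
have sup_le : Num.sqrt (sup S) <= c2.
  by rewrite ler_sqrtr_sqr //; apply: ge_sup; [exists a | move=> b /Meig /andP[]].
have inf_ge : c1 <= Num.sqrt (inf S).
  rewrite -[c1](ger0_norm (ltW c1_gt0)) -sqrtr_sqr; apply: ler_wsqrtr.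
  by apply: lb_le_inf; [exists a | move=> b /Meig /andP[]].
apply: ler_pM => //; first exact: sqrtr_ge0.
  by rewrite invr_ge0 sqrtr_ge0.
by rewrite lef_pV2 // posrE; apply: lt_le_trans inf_ge.
Qed.

End SingularValues.

Lemma gram_row_mx_sqrt (R : rcfType) m n (A : 'M[R]_(m, n)) (lam : R) :
  0 <= lam ->
  row_mx A (Num.sqrt lam)%:M *m (row_mx A (Num.sqrt lam)%:M)^T =
  A *m A^T + lam%:M.
Proof.
move=> lam0; rewrite tr_row_mx tr_scalar_mx mul_row_col -scalar_mxM -expr2.
by rewrite sqr_sqrtr.
Qed.

Section Congruence.
Variable R : realFieldType.

Lemma unitmx_of_qform_gt0 n (N : 'M[R]_n) :
  (forall u, u != 0 -> 0 < qform (N^T *m N) u) -> N \in unitmx.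
Proof.
move=> N_pd; rewrite -unitmx_tr -row_free_unit -kermx_eq0; apply/contraT => ker0.
have := N_pd (nz_row (kermx N^T)); rewrite nz_row_eq0 ker0 => /(_ isT).
rewrite -[X in _ *m X]trmxK qform_gram.
by rewrite (sub_kermxP (nz_row_sub _)) /sqnorm mul0mx mxE ltxx.
Qed.

Lemma eigenvalue_congruence_bounds n (N S : 'M[R]_n) (k1 k2 a : R) :
  N \in unitmx -> 0 < k1 -> 0 < k2 ->
  (forall u, k1 * qform S u <= qform (N^T *m N) u <= k2 * qform S u) ->
  eigenvalue ((invmx N)^T *m S *m invmx N) a -> k2^-1 <= a <= k1^-1.
Proof.
move=> Nu k1_gt0 k2_gt0 NS /eigenvalueP [v /qform_eigenvector Ev v0].
set u := v *m (invmx N)^T.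
have vE : v = u *m N^T by rewrite -mulmxA -trmx_mul mulmxV // trmx1 mulmx1.
have qSE : qform S u = a * sqnorm v.
  by rewrite -Ev /qform /u trmx_mul trmxK !mulmxA.
have qTE : qform (N^T *m N) u = sqnorm v.
  by rewrite /qform /sqnorm [in RHS]vE [in RHS]trmx_mul trmxK !mulmxA.
have := NS u; rewrite qSE qTE => /andP [le1 le2].
have v_gt0 := sqnorm_gt0 v0.
rewrite -[k2^-1]mulr1 -[k1^-1]mulr1 ler_pdivlMl // ler_pdivrMl //.
apply/andP; split; nra.
Qed.

End Congruence.

Lemma qform_sketch_bounds (R : rcfType) m n r s (A : 'M[R]_(m, n))
    (W : 'M[R]_(m, r)) (V : 'M[R]_(n, r)) (X : 'M[R]_(n, s)) (lam k1 k2 : R) :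
  A = W *m V^T -> V^T *m V = 1%:M -> 0 <= lam -> k1 <= 1 -> 1 <= k2 ->
  (forall a, eigenvalue ((X^T *m V)^T *m (X^T *m V)) a -> k1 <= a <= k2) ->
  forall u : 'rV[R]_m,
  k1 * qform (A *m A^T + lam%:M) u <= qform (A *m X *m X^T *m A^T + lam%:M) u
    <= k2 * qform (A *m A^T + lam%:M) u.
Proof.
move=> AE VV lam0 k1_le1 k2_ge1 Geig u; set y := u *m W.
have qA : qform (A *m A^T) u = sqnorm y.
  by rewrite qform_gram AE mulmxA /sqnorm trmx_mul trmxK mulmxA -(mulmxA y) VV mulmx1.
have qAX : qform (A *m X *m X^T *m A^T) u = qform ((X^T *m V)^T *m (X^T *m V)) y.
  by rewrite /qform AE !trmx_mul !trmxK !mulmxA.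
have Gsym : ((X^T *m V)^T *m (X^T *m V))^T = (X^T *m V)^T *m (X^T *m V).
  by rewrite trmx_mul trmxK.
have /andP [Gk1 Gk2] := rayleigh_bounds Gsym Geig y.
have t_ge0 : 0 <= lam * sqnorm u by rewrite mulr_ge0 ?sqnorm_ge0.
rewrite !qformD_scalar qA qAX.
by apply/andP; split; nra.
Qed.

Theorem lemma2p2 (R : realType) (m n s : nat)
  (A : 'M[R]_(m, n)) (U : 'M[R]_m) (d : 'rV[R]_m) (V : 'M[R]_(n, m))
  (lam eps : R) (X : 'M[R]_(n, s)) (Rm : 'M[R]_m) :
  (m < n)%N ->
  (* economy SVD  A = U diag(d) V^T *)
  U^T *m U = 1%:M ->
  (forall i : 'I_m, 0 <= d 0 i) ->
  (forall i j : 'I_m, (i <= j)%N -> d 0 j <= d 0 i) ->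
  V^T *m V = 1%:M ->
  A = U *m diag_mx d *m V^T ->
  0 < lam ->
  (s < n)%N -> (m < s)%N ->
  0 < eps -> eps < 1 ->
  1 - eps < sigma_min (X^T *m V) ->
  sigma_min (X^T *m V) <= sigma_max (X^T *m V) ->
  sigma_max (X^T *m V) < 1 + eps ->
  upper_triangular Rm ->
  Rm^T *m Rm = A *m X *m X^T *m A^T + lam%:M ->
  kappa2 ((invmx Rm)^T *m row_mx A (Num.sqrt lam)%:M) <= (1 + eps) / (1 - eps).
Proof.
(* only [A = W V^T] with orthonormal columns of [V] matters, not the rest of the SVD *)
move=> mn _ _ _ VV AE lam_gt0 _ ms eps_gt0 eps_lt1 sig_min _ sig_max _ RR.
have Geig a : eigenvalue ((X^T *m V)^T *m (X^T *m V)) a ->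
    (1 - eps) ^+ 2 <= a <= (1 + eps) ^+ 2.
  by apply: eigenvalue_gram_sigma_bounds sig_min sig_max => //; [exact: ltnW | lra].
have := qform_sketch_bounds AE VV (ltW lam_gt0) _ _ Geig.
rewrite -RR => /(_ ltac:(nra) ltac:(nra)) RA.
have Ru : Rm \in unitmx.
  apply: unitmx_of_qform_gt0 => u u0; apply: lt_le_trans (proj1 (andP (RA u))).
  rewrite qformD_scalar qform_gram mulr_gt0 ?exprn_gt0 ?subr_gt0 //.
  by rewrite ltr_wpDl ?sqnorm_ge0 // mulr_gt0 // sqnorm_gt0.
apply: le_trans (kappa2_le_ratio (c1 := (1 + eps)^-1) (c2 := (1 - eps)^-1) _ _ _ _) _.
- by rewrite -[X in (X < _)%N]add0n ltn_add2r (leq_ltn_trans _ mn).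
- by rewrite invr_gt0; lra.
- by rewrite invr_ge0; lra.
- move=> a; rewrite trmx_mul trmxK mulmxA -(mulmxA _ (row_mx _ _)).
  rewrite gram_row_mx_sqrt ?(ltW lam_gt0) // !exprVn.
  by apply: eigenvalue_congruence_bounds RA; rewrite // exprn_gt0 //; lra.
- by rewrite invrK mulrC.
Qed.
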